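(* Let $S\subseteq S_n$ be a sharply transitive set of permutations and let $L$ be the latin square whose rows are the permutations in $S$ (row corresponding to $\sigma\in S$ having entry $\sigma(i)$ in column $i$). Then $\mathrm{cr}(S)\le n-1$, with equality if and only if $L$ has a transversal.
   Context: $S_n$ is the symmetric group on $\{1,\dots,n\}$ with the Hamming distance: the distance between $g,h\in S_n$ is the number of points $i$ with $g(i)\ne h(i)$. The covering radius $\mathrm{cr}(P)$ of a nonempty $P\subseteq S_n$ is the smallest $r$ such that every permutation in $S_n$ is at distance at most $r$ from some element of $P$. A set $S\subseteq S_n$ is sharply transitive if for all $i,j\in\{1,\dots,n\}$ there is exactly one $\sigma\in S$ with $\sigma(i)=j$; its permutations then form the rows of a latin square of order $n$. A transversal of a latin square of order $n$ is a set of $n$ cells, one from each row and one from each column, no two containing the same symbol. *)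

From mathcomp Require Import all_boot all_fingroup.
Set Implicit Arguments. Unset Strict Implicit. Unset Printing Implicit Defensive.

Definition hdist (n : nat) (g h : 'S_n) : nat := #|[set i | g i != h i]|.

Definition covers (n : nat) (P : {set 'S_n}) (r : nat) : bool :=
  [forall g : 'S_n, [exists h in P, hdist g h <= r]].

(* Covering radius: the smallest r such that P covers S_n with radius r.
   Every r >= n works for nonempty P (hdist <= n), so searching 0..n suffices;
   for empty P the value is meaningless (n.+1). *)
Definition cr (n : nat) (P : {set 'S_n}) : nat :=
  find (covers P) (iota 0 n.+1).

Definition sharply_transitive (n : nat) (S : {set 'S_n}) : Prop :=
  forall i j : 'I_n, #|[set s in S | s i == j]| = 1.

(* The latin square L with rows indexed by sigma in S and columns by i;
   a cell is a pair (sigma, i) with entry sigma(i). *)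
Definition ls_entry (n : nat) (c : 'S_n * 'I_n) : 'I_n := c.1 c.2.

Definition is_transversal (n : nat) (S : {set 'S_n}) (T : {set 'S_n * 'I_n}) : Prop :=
  [/\ T \subset setX S [set: 'I_n],
      #|T| = n,
      (forall s, s \in S -> #|[set c in T | c.1 == s]| = 1),
      (forall i : 'I_n, #|[set c in T | c.2 == i]| = 1) &
      {in T &, forall c d, ls_entry c = ls_entry d -> c = d}].

Definition has_transversal (n : nat) (S : {set 'S_n}) : Prop :=
  exists T : {set 'S_n * 'I_n}, is_transversal S T.

From Pilot Require Import Defs.
From mathcomp Require Import all_boot all_fingroup.
From mathcomp Require Import zify.
Set Implicit Arguments. Unset Strict Implicit. Unset Printing Implicit Defensive.

(* Write agree g s for the number of points where g and s coincide, so that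
   hdist g s + agree g s = n.  The proof has three independent parts.
   1. For ANY set P, once cr P <= n.-1 we have cr P = n.-1 exactly when some
      permutation g lies at distance >= n.-1 from every element of P; this is
      read off from the definition of cr as the first covering radius.
   2. Sharp transitivity makes every g agree with some s in S at any given
      point, so S covers with radius n.-1; moreover the agreements of g with
      the rows of S sum to n = #|S|, so "agree g s <= 1 for all s in S"
      forces "agree g s = 1 for all s in S".
   3. The permutations g with agree g s = 1 for every s in S are exactly the
      transversals of the latin square L: the transversal is the set of cells
      (s, i) with s i = g i, and conversely g reads off the symbol of the
      transversal in each column. *)

Definition agree n (g s : 'S_n) : nat := #|[set i | g i == s i]|.

Lemma hdist_agree n (g s : 'S_n) : hdist g s + agree g s = n.
Proof.
rewrite /hdist /agree addnC -[n in _ = n]card_ord -(cardsC [set i | g i == s i]).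
by congr (_ + _); apply: eq_card => i; rewrite !inE.
Qed.

Lemma far_agree n (g s : 'S_n) : (n.-1 <= hdist g s) = (agree g s <= 1).
Proof.
have := hdist_agree g s; move: (hdist g s) (agree g s) => d a <-.
by apply/idP/idP; lia.
Qed.

Lemma card_onto_ord (T : finType) n (A : {set T}) (f : T -> 'I_n) :
  {in A &, injective f} -> (forall j, exists2 x, x \in A & f x = j) -> #|A| = n.
Proof.
move=> f_inj f_onto; rewrite -(card_in_imset f_inj) -[RHS]card_ord -cardsT.
apply: eq_card => j; rewrite inE.
by have [x xA <-] := f_onto j; apply: imset_f.
Qed.

Section CoveringRadius.
Variables (n : nat) (P : {set 'S_n}).

Lemma cr_le_covers k : k <= n -> covers P k -> cr P <= k.
Proof.
move=> le_kn cov_k; rewrite leqNgt; apply/negP => /(before_find 0).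
by rewrite nth_iota ?add0n ?cov_k.
Qed.

Lemma covers_cr : cr P <= n -> covers P (cr P).
Proof.
move=> le_cr; have found : has (covers P) (iota 0 n.+1).
  by rewrite has_find size_iota ltnS.
by have := nth_find 0 found; rewrite nth_iota ?add0n // size_iota ltnS.
Qed.

Lemma not_covers_lt_cr k : k < cr P -> ~~ covers P k.
Proof.
move=> lt_k; have le_cr : cr P <= n.+1 by rewrite -[n.+1](size_iota 0) find_size.
by have := before_find 0 lt_k; rewrite nth_iota ?add0n ?(leq_trans lt_k) // => ->.
Qed.

Lemma cr_eq_pred_far : cr P <= n.-1 ->
  cr P = n.-1 <-> exists g, forall s, s \in P -> n.-1 <= hdist g s.
Proof.
move=> le_cr; split => [cr_eq | [g g_far]].
- have [cr0 | cr_gt0] := posnP (cr P).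
    by exists 1%g => s _; rewrite -cr_eq cr0.
  have lt_pred : (cr P).-1 < cr P by rewrite ltn_predL.
  have /forallPn [g /exists_inPn g_far] := not_covers_lt_cr lt_pred.
  by exists g => s sP; have := g_far s sP; rewrite -cr_eq; lia.
- apply/eqP; rewrite eqn_leq le_cr leqNgt; apply/negP => lt_cr.
  have /forallP/(_ g)/exists_inP [s sP d_le] := covers_cr (leq_trans le_cr (leq_pred n)).
  by have := g_far s sP; lia.
Qed.

End CoveringRadius.

Section SharplyTransitive.
Variables (n : nat) (S : {set 'S_n}).
Hypothesis hS : sharply_transitive S.

Lemma st_witness i j : exists2 s, s \in S & s i = j.
Proof.
have /eqP/cards1P [s s_only] := hS i j.
have : s \in [set t in S | t i == j] by rewrite s_only set11.
by rewrite inE => /andP [sS /eqP sij]; exists s.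
Qed.

Lemma st_inj (i : 'I_n) : {in S &, forall s t : 'S_n, s i = t i -> s = t}.
Proof.
move=> s t sS tS st_i; have /eqP/cards1P [u u_only] := hS i (s i).
have : s \in [set r in S | r i == s i] by rewrite inE sS eqxx.
have : t \in [set r in S | r i == s i] by rewrite inE tS st_i eqxx.
by rewrite u_only !inE => /eqP -> /eqP ->.
Qed.

Lemma card_st (i0 : 'I_n) : #|S| = n.
Proof. exact: card_onto_ord (@st_inj i0) (st_witness i0). Qed.

(* Each column contributes exactly one agreement of g with the rows of L. *)
Lemma sum_agree (g : 'S_n) : \sum_(s in S) agree g s = n.
Proof.
rewrite /agree; under eq_bigr => s _ do rewrite -sum1dep_card big_mkcond.
rewrite exchange_big -[n in _ = n]card_ord -sum1_card; apply: eq_bigr => i _.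
rewrite -big_mkcondr sum1dep_card -(hS i (g i)).
by apply: eq_card => s; rewrite !inE eq_sym.
Qed.

Lemma covers_pred : 0 < n -> covers S n.-1.
Proof.
move=> n_gt0; apply/forallP => g; pose i0 := Ordinal n_gt0.
have [s sS s_i0] := st_witness i0 (g i0).
have agree_gt0 : 0 < agree g s.
  by rewrite card_gt0; apply/set0Pn; exists i0; rewrite inE s_i0.
apply/exists_inP; exists s => //; have := hdist_agree g s; lia.
Qed.

(* Part 2b: agreeing at most once with every row means agreeing exactly once,
   as the n agreements are spread over the n rows. *)
Lemma agree_le1_eq1 (g : 'S_n) : 0 < n ->
  (forall s, s \in S -> agree g s <= 1) -> forall s, s \in S -> agree g s = 1.
Proof.
move=> n_gt0 le1 s sS.
have bound : forall t, t \in S -> agree g t <= 1 ?= iff (agree g t == 1).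
  by move=> t tS; split; [exact: le1 | ].
have [_] := leqif_sum bound.
rewrite sum_agree sum1_card (card_st (Ordinal n_gt0)) eqxx.
by move/esym/forall_inP/(_ s sS)/eqP.
Qed.

Definition agreement_cells (g : 'S_n) : {set 'S_n * 'I_n} :=
  [set c | (c.1 \in S) && (c.1 c.2 == g c.2)].

(* Part 3a: a permutation agreeing once with every row yields a transversal.
   (Qualified name: finset also defines an is_transversal.) *)
Lemma transversal_of_perm (g : 'S_n) :
  (forall s, s \in S -> agree g s = 1) -> Defs.is_transversal S (agreement_cells g).
Proof.
move=> agree1; split.
- by apply/subsetP => c; rewrite !inE andbT => /andP [].
- apply: (card_onto_ord (f := snd)).
    move=> [s i] [t j]; rewrite !inE /= => /andP [sS /eqP si] /andP [tS /eqP tj] ij.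
    by subst j; rewrite (st_inj sS tS (etrans si (esym tj))).
  by move=> i; have [s sS si] := st_witness i (g i); exists (s, i); rewrite // inE sS si eqxx.
- move=> s sS; rewrite -(agree1 s sS) /agree.
  have -> : [set c in agreement_cells g | c.1 == s] = setX [set s] [set i | g i == s i].
    apply/setP => [[t i]]; rewrite !inE /=.
    by have [-> | _] := eqVneq t s; rewrite ?andbT ?andbF // sS eq_sym.
  by rewrite cardsX cards1 mul1n.
- move=> i; rewrite -(hS i (g i)).
  have -> : [set c in agreement_cells g | c.2 == i] = setX [set s in S | s i == g i] [set i].
    apply/setP => [[t j]]; rewrite !inE /=.
    by have [-> | _] := eqVneq j i; rewrite ?andbT ?andbF.
  by rewrite cardsX cards1 muln1.
- move=> [s i] [t j]; rewrite !inE /ls_entry /= => /andP [sS /eqP si] /andP [tS /eqP tj] st.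
  have ij : i = j by apply: (@perm_inj _ g); rewrite -si -tj.
  by subst j; rewrite (st_inj sS tS st).
Qed.

(* Part 3b: reading off the symbol of a transversal in each column gives a
   permutation that agrees at most once with every row. *)
Lemma perm_of_transversal :
  has_transversal S -> exists g, forall s, s \in S -> agree g s <= 1.
Proof.
move=> [T [T_sub _ T_row T_col T_sym]].
pose cell i := odflt (1%g, i) [pick c in T | c.2 == i].
have cellP i : cell i \in T /\ (cell i).2 = i.
  rewrite /cell; case: pickP => [c /andP [cT /eqP ci] | none] //=.
  have /eqP/cards1P [c c_only] := T_col i.
  by have := set11 c; rewrite -c_only inE none.
have cell_inj : injective cell by move=> i j eq_ij; rewrite -(cellP i).2 eq_ij (cellP j).2.
have sym_inj : injective (fun i => ls_entry (cell i)).
  move=> i j /T_sym eq_ij; apply: cell_inj.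
  by apply: eq_ij; [exact: (cellP i).1 | exact: (cellP j).1].
exists (perm sym_inj) => s sS; rewrite /agree -(T_row s sS) -(card_imset _ cell_inj).
apply: subset_leq_card; apply/subsetP => c /imsetP [i]; rewrite inE permE /ls_entry => /eqP gi ->.
have [cT ci] := cellP i; rewrite inE cT /=.
have rowS : (cell i).1 \in S by have := subsetP T_sub _ cT; rewrite inE => /andP [].
by rewrite ci in gi; apply/eqP; apply: (st_inj rowS sS gi).
Qed.

End SharplyTransitive.

Theorem theorem6p2 (n : nat) (n_gt0 : 0 < n) (S : {set 'S_n})
  (hS : sharply_transitive S) :
  cr S <= n.-1 /\ (cr S = n.-1 <-> has_transversal S).
Proof.
have cr_le : cr S <= n.-1 := cr_le_covers (leq_pred n) (covers_pred hS n_gt0).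
split => //; apply: iff_trans (cr_eq_pred_far cr_le) _; split.
- case=> g g_far; exists (agreement_cells S g); apply: (transversal_of_perm hS).
  by apply: agree_le1_eq1 => // s sS; rewrite -far_agree; apply: g_far.
- case/(perm_of_transversal hS) => g le1; exists g => s sS.
  by rewrite far_agree; apply: le1.
Qed.
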